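(* Let $(X,d^\star)$ be a $\star$-metric space. If the topological space $(X,\mathscr{T}_{d^\star})$ is countably compact, then $(X,d^\star)$ is totally bounded.
   Context: A $t$-definer is a function $\star:[0,\infty)\times[0,\infty)\to[0,\infty)$ such that for all $a,b,c\ge 0$: $a\star b=b\star a$; $a\star(b\star c)=(a\star b)\star c$; if $a\le b$ then $a\star c\le b\star c$; $a\star 0=a$; and $\star$ is continuous in its first variable with respect to the Euclidean topology. Given a nonempty set $X$ and a $t$-definer $\star$, a $\star$-metric on $X$ is a function $d^\star:X\times X\to[0,\infty)$ such that for all $x,y,z\in X$: $d^\star(x,y)=0$ iff $x=y$; $d^\star(x,y)=d^\star(y,x)$; and $d^\star(x,y)\le d^\star(x,z)\star d^\star(z,y)$. Put $B_{d^\star}(a,r)=\{x\in X: d^\star(a,x)<r\}$ and let $\mathscr{T}_{d^\star}$ be the topology consisting of all $U\subseteq X$ such that for each $a\in U$ some $B_{d^\star}(a,r)$, $r>0$, is contained in $U$. A space is countably compact if every countable open cover has a finite subcover. $(X,d^\star)$ is totally bounded if for every $\epsilon>0$ there is a finite $F\subseteq X$ with $X=\bigcup_{x\in F}B_{d^\star}(x,\epsilon)$. *)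

From Stdlib Require Import Reals List.
Open Scope R_scope.

(* A t-definer: an operation on [0,oo), modelled as star : R -> R -> R
   whose axioms are required on nonnegative arguments, and which maps
   [0,oo) x [0,oo) into [0,oo). *)
Definition t_definer (star : R -> R -> R) : Prop :=
  (forall a b, 0 <= a -> 0 <= b -> 0 <= star a b) /\
  (forall a b, 0 <= a -> 0 <= b -> star a b = star b a) /\
  (forall a b c, 0 <= a -> 0 <= b -> 0 <= c ->
      star a (star b c) = star (star a b) c) /\
  (forall a b c, 0 <= a -> 0 <= b -> 0 <= c -> a <= b -> star a c <= star b c) /\
  (forall a, 0 <= a -> star a 0 = a) /\
  (forall b a, 0 <= b -> 0 <= a ->
     forall eps, 0 < eps -> exists delta, 0 < delta /\
       forall x, 0 <= x -> Rabs (x - a) < delta ->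
         Rabs (star x b - star a b) < eps).

Definition star_metric {X : Type} (star : R -> R -> R) (d : X -> X -> R) : Prop :=
  (forall x y, 0 <= d x y) /\
  (forall x y, d x y = 0 <-> x = y) /\
  (forall x y, d x y = d y x) /\
  (forall x y z, d x y <= star (d x z) (d z y)).

Definition ball {X : Type} (d : X -> X -> R) (a : X) (r : R) : X -> Prop :=
  fun x => d a x < r.

Definition d_open {X : Type} (d : X -> X -> R) (U : X -> Prop) : Prop :=
  forall a, U a -> exists r, 0 < r /\ forall x, ball d a r x -> U x.

(* A countable cover is indexed by nat (finite covers can be padded by
   repetition); a finite subcover is given by a finite list of indices. *)
Definition countably_compact {X : Type} (d : X -> X -> R) : Prop :=
  forall U : nat -> (X -> Prop),
    (forall n, d_open d (U n)) ->
    (forall x, exists n, U n x) ->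
    exists l : list nat, forall x, exists n, In n l /\ U n x.

Definition totally_bounded {X : Type} (d : X -> X -> R) : Prop :=
  forall eps, 0 < eps ->
    exists F : list X, forall x, exists y, In y F /\ ball d y eps x.

From Stdlib Require Import Reals List Lra Lia Classical ClassicalEpsilon.
Open Scope R_scope.

(* If X is not totally bounded, some radius eps admits no finite eps-net, so a
   greedy choice produces a sequence whose terms are pairwise at distance
   >= eps.  Because a ⋆ 0 = a and ⋆ is monotone and continuous in its first variable,
   x ⋆ y < eps as soon as x and y are small enough; hence a small ball around
   any point contains at most one term of the sequence, and every set of terms
   is closed.  Removing all terms but the n-th gives a countable open cover
   with no finite subcover. *)

Lemma t_definer_small (star : R -> R -> R) :
  t_definer star -> forall eps, 0 < eps ->
  exists r, 0 < r /\
    forall x y, 0 <= x -> x < r -> 0 <= y -> y < r -> star x y < eps.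
Proof.
  intros [_ [Hcom [_ [Hmono [H0 Hcont]]]]] eps Heps.
  destruct (Hcont (eps / 2) 0 ltac:(lra) (Rle_refl 0) (eps / 2) ltac:(lra))
    as [delta [Hdelta Hc]].
  exists (Rmin delta (eps / 2)); split; [now apply Rmin_pos; lra|].
  intros x y Hx Hxr Hy Hyr.
  pose proof (Rmin_l delta (eps / 2)); pose proof (Rmin_r delta (eps / 2)).
  assert (Hx_half : star x (eps / 2) < eps).
  { specialize (Hc x Hx ltac:(rewrite Rminus_0_r, Rabs_right; lra)).
    rewrite (Hcom 0 (eps / 2)), H0 in Hc by lra.
    apply Rabs_def2 in Hc; lra. }
  rewrite (Hcom x y) by lra.
  assert (Hyx : star y x <= star (eps / 2) x) by (apply Hmono; lra).
  rewrite (Hcom (eps / 2) x) in Hyx by lra.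
  lra.
Qed.

Section Greedy.
Variables (X : Type) (g : list X -> X).

Fixpoint greedy_prefix (n : nat) : list X :=
  match n with
  | O => nil
  | S k => g (greedy_prefix k) :: greedy_prefix k
  end.

Lemma greedy_prefix_In m n :
  (m < n)%nat -> In (g (greedy_prefix m)) (greedy_prefix n).
Proof.
  induction n as [|n IHn]; intro Hmn; [lia|]; simpl.
  destruct (Nat.eq_dec m n) as [->|Hne]; [now left|right; apply IHn; lia].
Qed.

End Greedy.

Lemma greedy_sequence (X : Type) (P : X -> X -> Prop) :
  (forall F : list X, exists x, forall y, In y F -> ~ P y x) ->
  exists s : nat -> X, forall m k, (m < k)%nat -> ~ P (s m) (s k).
Proof.
  intro Havoid.
  destruct (choice _ Havoid) as [g Hg].
  exists (fun n => g (greedy_prefix X g n)); intros m k Hmk.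
  exact (Hg _ _ (greedy_prefix_In X g m k Hmk)).
Qed.

Definition separated {X : Type} (d : X -> X -> R) (eps : R) (s : nat -> X) :=
  forall m k, m <> k -> eps <= d (s m) (s k).

Lemma no_net_separated (X : Type) (d : X -> X -> R) (eps : R) :
  (forall x y, d x y = d y x) ->
  ~ (exists F : list X, forall x, exists y, In y F /\ ball d y eps x) ->
  exists s, separated d eps s.
Proof.
  intros Dsym Hnonet.
  destruct (greedy_sequence X (fun y x => ball d y eps x)) as [s Hs].
  - intro F; apply NNPP; intro Hnot; apply Hnonet; exists F; intro x.
    apply NNPP; intro Hx; apply Hnot; exists x; intros y Hy Hball.
    apply Hx; eauto.
  - exists s; intros m k Hmk; apply Rnot_lt_le.
    destruct (Nat.lt_gt_cases m k) as [[Hlt|Hgt] _]; [exact Hmk| |].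
    + exact (Hs m k Hlt).
    + rewrite Dsym; exact (Hs k m Hgt).
Qed.

Lemma countably_compact_no_discrete_seq (X : Type) (d : X -> X -> R)
    (s : nat -> X) :
  countably_compact d ->
  (forall n, d_open d (fun x => forall m, m <> n -> x <> s m)) ->
  (forall m k, s m = s k -> m = k) ->
  False.
Proof.
  intros CC Hopen Hinj.
  destruct (CC (fun n x => forall m, m <> n -> x <> s m) Hopen) as [l Hl].
  - intro x; destruct (classic (exists m, x = s m)) as [[m ->]|Hno].
    + exists m; intros k Hkm E; exact (Hkm (Hinj k m (eq_sym E))).
    + exists O; intros m _ ->; apply Hno; eauto.
  - pose proof (proj1 (list_max_le l (list_max l)) (le_n _)) as Hmax.
    destruct (Hl (s (S (list_max l)))) as [n [Hin Hn]].
    apply (Hn (S (list_max l))); [|reflexivity].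
    rewrite Forall_forall in Hmax; specialize (Hmax n Hin); lia.
Qed.

Section SeparatedSequence.
Variables (X : Type) (star : R -> R -> R) (d : X -> X -> R).
Hypotheses (Hstar : t_definer star) (Hd : star_metric star d).
Variables (eps : R) (s : nat -> X).
Hypotheses (Heps : 0 < eps) (Hsep : separated d eps s).

Lemma separated_injective m k : s m = s k -> m = k.
Proof.
  intro E; destruct (Nat.eq_dec m k) as [|Hmk]; [assumption|].
  destruct Hd as [_ [Deq _]].
  pose proof (Hsep m k Hmk) as H; rewrite E, (proj2 (Deq _ _) eq_refl) in H.
  lra.
Qed.

Lemma separated_ball_unique :
  exists r, 0 < r /\
    forall a m k, d a (s m) < r -> d a (s k) < r -> m = k.
Proof.
  destruct Hd as [Dnn [_ [Dsym Dtri]]].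
  destruct (t_definer_small star Hstar eps Heps) as [r [Hr Hsmall]].
  exists r; split; [exact Hr|]; intros a m k Hm Hk.
  destruct (Nat.eq_dec m k) as [|Hmk]; [assumption|exfalso].
  pose proof (Hsep m k Hmk); pose proof (Dtri (s m) (s k) a).
  rewrite (Dsym (s m) a) in *.
  pose proof (Hsmall _ _ (Dnn _ _) Hm (Dnn _ _) Hk).
  lra.
Qed.

Lemma d_open_avoid_separated (P : nat -> Prop) :
  d_open d (fun x => forall m, P m -> x <> s m).
Proof.
  destruct Hd as [Dnn [Deq _]].
  destruct separated_ball_unique as [r [Hr Huniq]].
  intros a Ha.
  destruct (classic (exists k, P k /\ d a (s k) < r)) as [[k [Hk Hak]]|Hfar].
  - assert (Hpos : 0 < d a (s k)).
    { destruct (Dnn a (s k)) as [|E]; [assumption|].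
      exfalso; exact (Ha k Hk (proj1 (Deq _ _) (eq_sym E))). }
    exists (Rmin r (d a (s k))); split; [now apply Rmin_pos|].
    intros x Hx m Hm ->; unfold ball in Hx.
    pose proof (Rmin_l r (d a (s k))); pose proof (Rmin_r r (d a (s k))).
    assert (m = k) as -> by (apply (Huniq a); lra).
    lra.
  - exists r; split; [exact Hr|].
    intros x Hx m Hm ->; apply Hfar; eauto.
Qed.

End SeparatedSequence.

Theorem corollary3p3 (X : Type) (star : R -> R -> R) (d : X -> X -> R) (x0 : X) :
  t_definer star -> star_metric star d ->
  countably_compact d -> totally_bounded d.
Proof.
  intros Hstar Hd CC eps Heps.
  pose proof Hd as (_ & _ & Dsym & _).
  apply NNPP; intro Hnonet.
  destruct (no_net_separated X d eps Dsym Hnonet) as [s Hsep].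
  apply (countably_compact_no_discrete_seq X d s CC).
  - intro n; exact (d_open_avoid_separated X star d Hstar Hd eps s Heps Hsep _).
  - exact (separated_injective X star d Hd eps s Heps Hsep).
Qed.
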